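(* Let $m,n\in\mathbb{N}$ be coprime with $1\le m\le n-1$, and let $\Gamma$ be a $\mathbb{D}_n$-symmetric billiard curve with equivariant parametrization $\gamma$. Let $Z_i=\gamma(X_i)$ be a $\mathbb{D}_n$-symmetric, Birkhoff, $n$-periodic billiard orbit of rotation number $\frac mn$. Let $(p,q)=s(n,m)$ with $s\in\mathbb{N}$, so that $X\in\mathbb{X}_{n,m}\subset\mathbb{X}_{p,q}$. Consider the Hessian of $$W_{p,q}(x_1,\dots,x_p)=\sum_{j=1}^{p-1}L(x_j,x_{j+1})+L(x_p,x_1+q)$$ at $(X_1,\dots,X_p)$. Then: - The Hessian is the symmetric tridiagonal circulant $p\times p$ matrix with diagonal entries $2\alpha$, and entries $\beta$ on the sub- and superdiagonals and in the two corners $(1,p),(p,1)$. Here $\alpha=\partial_{2,2}L(X_{i-1},X_i)=\partial_{1,1}L(X_i,X_{i+1})$ and $\beta=\partial_{1,2}L(X_i,X_{i+1})$ are independent of $i$. - For every $N\in\mathbb{Z}$, the vectors $v_i=\sin(2\pi Ni/p)$ and $w_i=\cos(2\pi Ni/p)$ ($i=1,\dots,p$) are eigenvectors with eigenvalue $2\alpha+2\beta\cos(2\pi N/p)$. - If $\gamma$ has constant speed $\|\gamma'\|\equiv c$, then $$\alpha=c^2\sin(m\pi/n)\Big(\frac{\sin(m\pi/n)}{L}-\kappa\Big),\qquad \beta=\frac{c^2\sin^2(m\pi/n)}{L},$$ where $L=\|Z_{i+1}-Z_i\|$ and $\kappa=\kappa(Z_i)$ (both independent of $i$).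
   Context: $\mathbb{D}_n=\langle R,S\rangle$, where $R$ is rotation by $2\pi/n$ and $S$ is the horizontal reflection. $\Gamma$ is a $C^2$ simple closed $\mathbb{D}_n$-invariant curve bounding a strictly convex domain, parametrized counterclockwise by a $1$-periodic $C^2$ immersion $\gamma$ descending to an embedding of $\mathbb{R}/\mathbb{Z}$, with $\gamma(x+1/n)=R\gamma(x)$ and $\gamma(-x)=S\gamma(x)$. $L(x,X)=\|\gamma(x)-\gamma(X)\|$, $\mathbb{X}_{p,q}=\{x:x_{i+p}=x_i+q\}$, and $\kappa$ is curvature. A billiard orbit satisfies the reflection law at each point, with lift $X$ ($\gamma(X_i)=Z_i$, $0<X_{i+1}-X_i<1$). $\mathbb{D}_n$-symmetric means each $g\in\mathbb{D}_n$ maps $Z_i$ to $Z_{k+i}$ for all $i$, or to $Z_{k-i}$ for all $i$, for some $k$. Birkhoff means $X_i\le X_j+l\Rightarrow X_{i+m}\le X_{j+m}+l$ for all integers. *)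

From Stdlib Require Import Reals Lra ZArith.
From Coquelicot Require Import Coquelicot.
Open Scope R_scope.

Definition pt := (R * R)%type.
Definition psub (a b : pt) : pt := (fst a - fst b, snd a - snd b).
Definition dot (a b : pt) : R := fst a * fst b + snd a * snd b.
Definition pnorm (a : pt) : R := sqrt (dot a a).
Definition pscale (c : R) (a : pt) : pt := (c * fst a, c * snd a).
Definition cross (a b : pt) : R := fst a * snd b - snd a * fst b.

Definition rot (th : R) (a : pt) : pt :=
  (cos th * fst a - sin th * snd a, sin th * fst a + cos th * snd a).
Definition reflS (a : pt) : pt := (fst a, - snd a).

(* The element R^a S^b of D_n acting on the plane. *)
Definition dn_act (n a : nat) (b : bool) (z : pt) : pt :=
  rot (2 * PI * INR a / INR n) (if b then reflS z else z).

Definition C2 (f : R -> R) : Prop :=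
  forall x, ex_derive f x /\ ex_derive (Derive f) x /\ continuous (Derive (Derive f)) x.

Definition gx (g : R -> pt) (t : R) : R := fst (g t).
Definition gy (g : R -> pt) (t : R) : R := snd (g t).
Definition dvel (g : R -> pt) (t : R) : pt := (Derive (gx g) t, Derive (gy g) t).
Definition kappa (g : R -> pt) (t : R) : R :=
  (Derive (gx g) t * Derive (Derive (gy g)) t - Derive (gy g) t * Derive (Derive (gx g)) t)
  / (pnorm (dvel g t)) ^ 3.

(* gamma : R -> R^2 is a 1-periodic C^2 immersion, injective modulo 1 (an embedding of
   R/Z), counterclockwise, bounding a strictly convex domain (every other point of the
   curve lies strictly to the left of each oriented tangent line), and D_n-equivariant:
   gamma(x + 1/n) = R gamma(x), gamma(-x) = S gamma(x). *)
Definition dn_billiard_curve (n : nat) (g : R -> pt) : Prop :=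
  C2 (gx g) /\ C2 (gy g) /\
  (forall t, g (t + 1) = g t) /\
  (forall s t, g s = g t -> exists k : Z, s - t = IZR k) /\
  (forall t, dvel g t <> (0, 0)) /\
  (forall s t, (forall k : Z, s - t <> IZR k) -> cross (dvel g t) (psub (g s) (g t)) > 0) /\
  (forall t, g (t + 1 / INR n) = rot (2 * PI / INR n) (g t)) /\
  (forall t, g (- t) = reflS (g t)).

Definition Lf (g : R -> pt) (x y : R) : R := pnorm (psub (g x) (g y)).

Definition d11 (F : R -> R -> R) (a b : R) : R :=
  Derive (fun t => Derive (fun u => F u b) t) a.
Definition d22 (F : R -> R -> R) (a b : R) : R :=
  Derive (fun t => Derive (fun u => F a u) t) b.
Definition d12 (F : R -> R -> R) (a b : R) : R :=
  Derive (fun t => Derive (fun u => F t u) b) a.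

(* Billiard orbit with lift X : Z -> R, Z_i = gamma(X_i), 0 < X_{i+1} - X_i < 1,
   reflection law at every point: the incoming and outgoing unit directions make the
   same angle with the tangent gamma'(X_i). *)
Definition unitv (a : pt) : pt := pscale (/ pnorm a) a.
Definition billiard_orbit (g : R -> pt) (X : Z -> R) : Prop :=
  (forall i : Z, 0 < X (i + 1)%Z - X i < 1) /\
  (forall i : Z,
     dot (unitv (psub (g (X i)) (g (X (i - 1)%Z)))) (dvel g (X i))
     = dot (unitv (psub (g (X (i + 1)%Z)) (g (X i)))) (dvel g (X i))).

Definition in_Xpq (p : Z) (q : R) (X : Z -> R) : Prop :=
  forall i : Z, X (i + p)%Z = X i + q.

Definition birkhoff (X : Z -> R) : Prop :=
  forall i j l k : Z, X i <= X j + IZR l -> X (i + k)%Z <= X (j + k)%Z + IZR l.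

Definition dn_symmetric (n : nat) (g : R -> pt) (X : Z -> R) : Prop :=
  forall (a : nat) (b : bool), exists k : Z,
    (forall i : Z, dn_act n a b (g (X i)) = g (X (k + i)%Z)) \/
    (forall i : Z, dn_act n a b (g (X i)) = g (X (k - i)%Z)).

Fixpoint sumR (f : nat -> R) (k : nat) : R :=
  match k with O => 0 | S k' => sumR f k' + f k' end.

(* W_{p,q}(x_1,...,x_p) for x : nat -> R (coordinates x 1 .. x p) *)
Definition Wpq (g : R -> pt) (p : nat) (q : R) (x : nat -> R) : R :=
  sumR (fun j => Lf g (x (j + 1)%nat) (x (j + 2)%nat)) (p - 1) + Lf g (x p) (x 1%nat + q).

Definition upd (x : nat -> R) (j : nat) (t : R) : nat -> R :=
  fun i => if Nat.eqb i j then t else x i.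
Definition partial (F : (nat -> R) -> R) (k : nat) (x : nat -> R) : R :=
  Derive (fun t => F (upd x k t)) (x k).
Definition hess (F : (nat -> R) -> R) (x : nat -> R) (j k : nat) : R :=
  Derive (fun t => partial F k (upd x j t)) (x j).

Definition vecX (X : Z -> R) : nat -> R := fun i => X (Z.of_nat i).

(* symmetric tridiagonal circulant p x p matrix (indices 1..p): 2a on the diagonal,
   b at positions (j,k) with j - k = +-1 mod p (including the corners (1,p),(p,1)). *)
Definition circ (p : nat) (a b : R) (j k : nat) : R :=
  (if Nat.eqb j k then 2 * a else 0)
  + (if Z.eqb (Z.modulo (Z.of_nat j - Z.of_nat k) (Z.of_nat p)) 1 then b else 0)
  + (if Z.eqb (Z.modulo (Z.of_nat k - Z.of_nat j) (Z.of_nat p)) 1 then b else 0).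

From Stdlib Require Import Reals Lra Lia ZArith Znumtheory.
From Coquelicot Require Import Coquelicot.
Open Scope R_scope.

(* The rotation of [D_n] maps the orbit to itself by an index shift or reversal, and since
   [gamma] is injective modulo 1 this forces [X (i + 1) = X i + m / n]; the reflection then
   makes every [X i] a centre of symmetry of the curve.  Consecutive pairs [(X i, X (i + 1))]
   are therefore all congruent under the symmetries of [gamma], so the second partials of
   [L] along the orbit are two constants [alpha], [beta], and reflecting through [X i]
   identifies [d22 L (X (i - 1)) (X i)] with [d11 L (X i) (X (i + 1))].  As [W_{p,q}] is the
   length of a closed chain, its Hessian is the tridiagonal circulant with these entries,
   diagonalised by the discrete Fourier modes.  For constant speed [c], the tangent at
   [Z_i] is orthogonal to [Z_i] and every chord makes the angle [m pi / n] with the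
   tangents at its ends, which turns the closed forms of the second partials of the chord
   length into the stated formulas. *)

Lemma Derive_shift (f : R -> R) c x : Derive (fun t => f (t + c)) x = Derive f (x + c).
Proof. unfold Derive. f_equal. apply Lim_ext. intros h. do 3 f_equal. ring. Qed.

Lemma d11_translate (F : R -> R -> R) s :
  (forall x y, F (x + s) (y + s) = F x y) -> forall x y, d11 F (x + s) (y + s) = d11 F x y.
Proof.
  intros H x y. unfold d11.
  rewrite (Derive_ext (fun t => Derive (fun u => F u (y + s)) t)
                      (fun t => Derive (fun u => F u y) (t + - s))).
  - rewrite (Derive_shift (fun t => Derive (fun u => F u y) t)). f_equal. ring.
  - intros t. rewrite <- Derive_shift. apply Derive_ext. intros u.
    rewrite <- (H (u + - s) y). f_equal. ring.
Qed.

Lemma d12_translate (F : R -> R -> R) s :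
  (forall x y, F (x + s) (y + s) = F x y) -> forall x y, d12 F (x + s) (y + s) = d12 F x y.
Proof.
  intros H x y. unfold d12.
  rewrite (Derive_ext (fun t => Derive (fun u => F t u) (y + s))
                      (fun t => Derive (fun u => F (t + - s) u) y)).
  - rewrite (Derive_shift (fun t => Derive (fun u => F t u) y)). f_equal. ring.
  - intros t. rewrite (Derive_ext (fun u => F t u) (fun u => F (t + - s) (u + - s))).
    + rewrite Derive_shift. f_equal. ring.
    + intros u. rewrite <- (H (t + - s) (u + - s)). f_equal; ring.
Qed.

Lemma d22_swap (F : R -> R -> R) :
  (forall x y, F x y = F y x) -> forall a b, d22 F a b = d11 F b a.
Proof.
  intros H a b. unfold d22, d11. apply Derive_ext. intros t. apply Derive_ext. auto.
Qed.

Lemma locally_reflect c x (P : R -> Prop) :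
  locally (c - x) P -> locally x (fun t => P (c - t)).
Proof.
  intros [e He]. exists e. intros t Ht. apply He.
  change (Rabs (c - t - (c - x)) < e). change (Rabs (t - x) < e) in Ht.
  replace (c - t - (c - x)) with (- (t - x)) by ring. now rewrite Rabs_Ropp.
Qed.

(* Coquelicot's [Derive] is a one-sided limit, so reflecting the variable needs
   differentiability. *)
Lemma d11_reflect (F : R -> R -> R) c a b x :
  (forall u, F u a = F (c - u) b) ->
  locally (c - x) (ex_derive (fun u => F u b)) ->
  ex_derive (Derive (fun u => F u b)) (c - x) ->
  d11 F x a = d11 F (c - x) b.
Proof.
  intros HF Hloc H2. unfold d11.
  rewrite (Derive_ext_loc _ (fun t => - Derive (fun u => F u b) (c - t))).
  - apply is_derive_unique.
    replace (Derive (fun t => Derive (fun u => F u b) t) (c - x))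
      with (opp (scal (-1) (Derive (fun t => Derive (fun u => F u b) t) (c - x))))
      by (unfold opp, scal; simpl; unfold mult; simpl; ring).
    apply (is_derive_opp (fun t => Derive (fun u => F u b) (c - t))).
    apply (is_derive_comp (fun t => Derive (fun u => F u b) t) (fun t => c - t)).
    + apply Derive_correct. exact H2.
    + auto_derive; auto; lra.
  - generalize (locally_reflect _ _ _ Hloc). apply filter_imp. intros t Ht.
    rewrite (Derive_ext _ (fun u => F (c - u) b)) by auto.
    apply is_derive_unique.
    replace (- Derive (fun u => F u b) (c - t)) with (scal (-1) (Derive (fun u => F u b) (c - t)))
      by (unfold scal; simpl; unfold mult; simpl; ring).
    apply (is_derive_comp (fun u => F u b) (fun u => c - u)).
    + apply Derive_correct. exact Ht.
    + auto_derive; auto; lra.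
Qed.

Lemma locally_sep a b : 0 < Rabs (a - b) < 1 -> locally a (fun t => 0 < Rabs (t - b) < 1).
Proof.
  intros Hab.
  assert (He : 0 < Rmin (Rabs (a - b)) (1 - Rabs (a - b))) by (apply Rmin_glb_lt; lra).
  exists (mkposreal _ He). intros t Ht.
  change (Rabs (t - a) < Rmin (Rabs (a - b)) (1 - Rabs (a - b))) in Ht.
  pose proof (Rmin_l (Rabs (a - b)) (1 - Rabs (a - b))).
  pose proof (Rmin_r (Rabs (a - b)) (1 - Rabs (a - b))).
  pose proof (Rabs_triang (t - a) (a - b)) as T1. pose proof (Rabs_triang (t - b) (a - t)) as T2.
  replace (t - a + (a - b)) with (t - b) in T1 by ring.
  replace (t - b + (a - t)) with (a - b) in T2 by ring.
  rewrite (Rabs_minus_sym a t) in T2. split; lra.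
Qed.

Lemma locally_forall_lt (P : nat -> R -> Prop) a p :
  (forall i, (i < p)%nat -> locally a (P i)) ->
  locally a (fun t => forall i, (i < p)%nat -> P i t).
Proof.
  induction p as [|p IH]; intros H.
  - apply filter_forall. intros t i Hi. lia.
  - generalize (filter_and _ _ (IH (fun i Hi => H i (Nat.lt_lt_succ_r _ _ Hi)))
                               (H p (Nat.lt_succ_diag_r p))).
    apply filter_imp. intros t [Ht Hp] i Hi.
    destruct (Nat.eq_dec i p) as [->|Hne]; auto. apply Ht. lia.
Qed.

Lemma sumR_ext (f h : nat -> R) k : (forall i, (i < k)%nat -> f i = h i) -> sumR f k = sumR h k.
Proof.
  induction k; simpl; intros H; auto.
  f_equal; [apply IHk; intros; apply H; lia | apply H; lia].
Qed.

Lemma sumR_plus (f h : nat -> R) k : sumR (fun i => f i + h i) k = sumR f k + sumR h k.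
Proof. induction k; simpl; [ring | rewrite IHk; ring]. Qed.

Lemma sumR_single (f : nat -> R) k i0 :
  (i0 < k)%nat -> (forall i, (i < k)%nat -> i <> i0 -> f i = 0) -> sumR f k = f i0.
Proof.
  induction k as [|k IH]; simpl; intros Hi H; [lia|].
  destruct (Nat.eq_dec i0 k) as [->|Hne].
  - rewrite (sumR_ext f (fun _ => 0)) by (intros; apply H; lia).
    enough (sumR (fun _ => 0) k = 0) by lra.
    clear. induction k; simpl; lra.
  - rewrite IH, (H k); try lia; try ring. intros; apply H; lia.
Qed.

Lemma is_derive_sumR (f : nat -> R -> R) (f' : nat -> R) x k :
  (forall i, (i < k)%nat -> is_derive (f i) x (f' i)) ->
  is_derive (fun t => sumR (fun i => f i t) k) x (sumR f' k).
Proof.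
  induction k; intros H; simpl.
  - auto_derive; auto.
  - apply (is_derive_plus (fun t => sumR (fun i => f i t) k) (f k)).
    + apply IHk. intros; apply H; lia.
    + apply H; lia.
Qed.

Lemma Z_bi_ind (P : Z -> Prop) : P 0%Z -> (forall i, P i <-> P (i + 1)%Z) -> forall i, P i.
Proof.
  intros H0 Hs i. induction i using Z.peano_ind; auto.
  - rewrite <- Z.add_1_r. now apply (Hs i).
  - apply (Hs (Z.pred i)). now replace (Z.pred i + 1)%Z with i by lia.
Qed.

Lemma iter_shift (X : Z -> R) (k : Z) (h : R) :
  (forall i, X (i + k)%Z = X i + h) -> forall u i, X (i + u * k)%Z = X i + IZR u * h.
Proof.
  intros H. apply (Z_bi_ind (fun u => forall i, X (i + u * k)%Z = X i + IZR u * h)).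
  - intros i. rewrite Z.mul_0_l, Z.add_0_r. simpl. ring.
  - intros u. rewrite plus_IZR. split; intros Hu i.
    + replace (i + (u + 1) * k)%Z with (i + u * k + k)%Z by lia. rewrite H, Hu. ring.
    + specialize (Hu i). replace (i + (u + 1) * k)%Z with (i + u * k + k)%Z in Hu by lia.
      rewrite H in Hu. lra.
Qed.

Lemma pt_eq (a b : pt) : fst a = fst b -> snd a = snd b -> a = b.
Proof. destruct a, b; simpl; intros; subst; auto. Qed.

Lemma rot_rot a b z : rot a (rot b z) = rot (a + b) z.
Proof. destruct z; unfold rot; simpl; rewrite cos_plus, sin_plus; apply pt_eq; simpl; ring. Qed.

Lemma rot_0 z : rot 0 z = z.
Proof. destruct z; unfold rot; simpl; rewrite cos_0, sin_0; apply pt_eq; simpl; ring. Qed.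

Lemma dot_rot th a b : dot (rot th a) (rot th b) = dot a b.
Proof.
  destruct a as [a1 a2], b as [b1 b2]; unfold dot, rot; simpl.
  pose proof (sin2_cos2 th) as H. unfold Rsqr in H.
  transitivity ((sin th * sin th + cos th * cos th) * (a1 * b1 + a2 * b2)); [ring|].
  rewrite H. ring.
Qed.

Lemma dot_reflS a b : dot (reflS a) (reflS b) = dot a b.
Proof. destruct a, b; unfold dot, reflS; simpl; ring. Qed.

Lemma psub_rot th a b : psub (rot th a) (rot th b) = rot th (psub a b).
Proof. destruct a, b; unfold psub, rot; simpl; apply pt_eq; simpl; ring. Qed.

Lemma psub_reflS a b : psub (reflS a) (reflS b) = reflS (psub a b).
Proof. destruct a, b; unfold psub, reflS; simpl; apply pt_eq; simpl; ring. Qed.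

Lemma dot_self_pnorm (v : pt) : dot v v = pnorm v * pnorm v.
Proof. unfold pnorm. rewrite sqrt_sqrt; auto. unfold dot. nra. Qed.

Section CurveSymmetries.

Variables (n : nat) (g : R -> pt).
Hypothesis n_pos : (0 < n)%nat.
Hypothesis g_periodic : forall t, g (t + 1) = g t.
Hypothesis g_rotation : forall t, g (t + 1 / INR n) = rot (2 * PI / INR n) (g t).
Hypothesis g_reflection : forall t, g (- t) = reflS (g t).

Lemma g_add_IZR (k : Z) t : g (t + IZR k) = g t.
Proof.
  revert k t. apply (Z_bi_ind (fun k => forall t, g (t + IZR k) = g t)).
  - intros t. now rewrite Rplus_0_r.
  - intros k. rewrite plus_IZR. split; intros H t.
    + now rewrite <- Rplus_assoc, g_periodic.
    + now rewrite <- (H t), <- Rplus_assoc, g_periodic.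
Qed.

Lemma g_add_frac (a : Z) t : g (t + IZR a / INR n) = rot (2 * PI * IZR a / INR n) (g t).
Proof.
  assert (Hn : 0 < INR n) by (apply lt_0_INR; lia).
  revert a t.
  apply (Z_bi_ind (fun a => forall t, g (t + IZR a / INR n) = rot (2 * PI * IZR a / INR n) (g t))).
  - intros t. replace (t + 0 / INR n) with t by (field; lra).
    replace (2 * PI * 0 / INR n) with 0 by (field; lra). now rewrite rot_0.
  - intros a. assert (Et : forall t, t + IZR (a + 1) / INR n = t + IZR a / INR n + 1 / INR n)
      by (intros; rewrite plus_IZR; field; lra).
    assert (Eth : 2 * PI * IZR (a + 1) / INR n = 2 * PI / INR n + 2 * PI * IZR a / INR n)
      by (rewrite plus_IZR; field; lra).
    split; intros H t.
    + now rewrite Et, g_rotation, H, rot_rot, Eth.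
    + specialize (H t). rewrite Et, g_rotation, Eth, <- rot_rot in H.
      rewrite <- (rot_0 (g _)), <- (Rplus_opp_l (2 * PI / INR n)), <- rot_rot, H.
      now rewrite rot_rot, Rplus_opp_l, rot_0.
Qed.

Lemma Lf_translate (a : Z) x y : Lf g (x + IZR a / INR n) (y + IZR a / INR n) = Lf g x y.
Proof. unfold Lf, pnorm. now rewrite !g_add_frac, psub_rot, dot_rot. Qed.

Lemma g_reflect_frac (z a : Z) t :
  g (IZR z + IZR a / INR n - t) = rot (2 * PI * IZR a / INR n) (reflS (g t)).
Proof.
  replace (IZR z + IZR a / INR n - t) with (- t + IZR a / INR n + IZR z) by ring.
  now rewrite g_add_IZR, g_add_frac, g_reflection.
Qed.

Lemma Lf_reflect (z a : Z) x y :
  Lf g (IZR z + IZR a / INR n - x) (IZR z + IZR a / INR n - y) = Lf g x y.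
Proof. unfold Lf, pnorm. now rewrite !g_reflect_frac, psub_rot, dot_rot, psub_reflS, dot_reflS. Qed.

Lemma dot_self_reflect (z a : Z) t :
  dot (g (IZR z + IZR a / INR n - t)) (g (IZR z + IZR a / INR n - t)) = dot (g t) (g t).
Proof. now rewrite g_reflect_frac, dot_rot, dot_reflS. Qed.

End CurveSymmetries.

Lemma is_derive_shift (f : R -> R) c y v :
  is_derive f (y + c) v -> is_derive (fun u => f (u + c)) y v.
Proof.
  intros H. replace v with (scal 1 v) by (unfold scal; simpl; unfold mult; simpl; ring).
  apply (is_derive_comp f (fun u => u + c)); [exact H|]. auto_derive; auto.
Qed.

Lemma upd_same x j l : upd x j (x j) l = x l.
Proof. unfold upd. destruct (Nat.eqb_spec l j); congruence. Qed.

Lemma is_derive_upd2 (F : R -> R -> R) (x : nat -> R) a b c j D1 D2 :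
  a <> b ->
  is_derive (fun u => F u (x b + c)) (x a) D1 ->
  is_derive (fun v => F (x a) v) (x b + c) D2 ->
  is_derive (fun t => F (upd x j t a) (upd x j t b + c)) (x j)
    ((if Nat.eqb a j then D1 else 0) + (if Nat.eqb b j then D2 else 0)).
Proof.
  intros Hab H1 H2. unfold upd.
  destruct (Nat.eqb a j) eqn:E1, (Nat.eqb b j) eqn:E2;
    [apply Nat.eqb_eq in E1, E2 | apply Nat.eqb_eq in E1 | apply Nat.eqb_eq in E2 | ].
  - lia.
  - subst j. rewrite Rplus_0_r. exact H1.
  - subst j. rewrite Rplus_0_l. exact (is_derive_shift (fun v => F (x a) v) c (x b) D2 H2).
  - rewrite Rplus_0_r. auto_derive; auto.
Qed.

Definition cyc_succ (p k : nat) : nat := if Nat.eqb k p then 1%nat else S k.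
Definition cyc_pred (p k : nat) : nat := if Nat.eqb k 1 then p else (k - 1)%nat.

(* Edge [i] of the closed chain runs from coordinate [i + 1] to [cyc_succ p (i + 1)];
   the closing edge from [x_p] to [x_1] carries the shift [q]. *)
Definition edge_shift (p : nat) (q : R) (i : nat) : R := if Nat.eqb (i + 1) p then q else 0.

Lemma Wpq_edges g p q x : (1 <= p)%nat ->
  Wpq g p q x = sumR (fun i => Lf g (x (i + 1)%nat) (x (cyc_succ p (i + 1)) + edge_shift p q i)) p.
Proof.
  intros Hp. unfold Wpq. destruct p as [|p]; [lia|]. simpl sumR at 2.
  replace (S p - 1)%nat with p by lia. f_equal.
  - apply sumR_ext. intros i Hi. unfold cyc_succ, edge_shift.
    destruct (Nat.eqb (i + 1) (S p)) eqn:E; [apply Nat.eqb_eq in E; lia|].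
    rewrite Rplus_0_r. do 2 f_equal. lia.
  - unfold cyc_succ, edge_shift. rewrite (proj2 (Nat.eqb_eq (p + 1) (S p))) by lia.
    now replace (p + 1)%nat with (S p) by lia.
Qed.

Lemma cyc_succ_neq p k : (2 <= p)%nat -> (1 <= k <= p)%nat -> k <> cyc_succ p k.
Proof. intros Hp Hk. unfold cyc_succ. destruct (Nat.eqb_spec k p); lia. Qed.

Lemma cyc_succ_pred p t k : (1 <= t <= p)%nat -> (1 <= k <= p)%nat ->
  cyc_succ p t = k <-> t = cyc_pred p k.
Proof.
  intros Ht Hk. unfold cyc_succ, cyc_pred.
  destruct (Nat.eqb_spec t p), (Nat.eqb_spec k 1); lia.
Qed.

Lemma cyc_succ_mod p j k : (2 <= p)%nat -> (1 <= j <= p)%nat -> (1 <= k <= p)%nat ->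
  cyc_succ p k = j <-> ((Z.of_nat j - Z.of_nat k) mod Z.of_nat p = 1)%Z.
Proof.
  intros Hp Hj Hk. unfold cyc_succ. destruct (Nat.eqb_spec k p) as [->|Hkp]; split; intros H.
  - subst j. replace (Z.of_nat 1 - Z.of_nat p)%Z with (1 + (-1) * Z.of_nat p)%Z by lia.
    rewrite Z.mod_add by lia. apply Z.mod_small; lia.
  - replace (Z.of_nat j - Z.of_nat p)%Z with (Z.of_nat j + (-1) * Z.of_nat p)%Z in H by lia.
    rewrite Z.mod_add in H by lia. destruct (Nat.eq_dec j p) as [->|].
    + rewrite Z_mod_same_full in H. lia.
    + rewrite Z.mod_small in H by lia. lia.
  - subst j. replace (Z.of_nat (S k) - Z.of_nat k)%Z with 1%Z by lia. apply Z.mod_small; lia.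
  - pose proof (Z.div_mod (Z.of_nat j - Z.of_nat k) (Z.of_nat p) ltac:(lia)) as E.
    rewrite H in E. set (d := ((Z.of_nat j - Z.of_nat k) / Z.of_nat p)%Z) in E.
    assert (Hd : d = 0%Z \/ d = (-1)%Z) by nia. destruct Hd as [-> | ->]; lia.
Qed.

(** * Derivatives of the chord length and of [W_{p,q}] *)

(* [auto_derive] leaves eta-expanded coordinate functions behind. *)
Ltac fold_eta g := unfold Rminus in *;
  change (fun u => gx g u) with (gx g) in *; change (fun u => gy g u) with (gy g) in *;
  change (fun u => Derive (gx g) u) with (Derive (gx g)) in *;
  change (fun u => Derive (gy g) u) with (Derive (gy g)) in *.

Section ChordLength.

Variable g : R -> pt.
Hypothesis gx_C2 : C2 (gx g).
Hypothesis gy_C2 : C2 (gy g).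
Hypothesis g_injective : forall s t, g s = g t -> exists k : Z, s - t = IZR k.

Definition chord_sq (x y : R) : R :=
  (gx g x - gx g y) * (gx g x - gx g y) + (gy g x - gy g y) * (gy g x - gy g y).

Definition chord_tangent (x y : R) : R :=
  (gx g x - gx g y) * Derive (gx g) x + (gy g x - gy g y) * Derive (gy g) x.

(* Closed forms of [d_1 L], [d_1 d_1 L] and [d_2 d_1 L]; by symmetry of [L] they give all
   second partials. *)
Definition chord_d1 (x y : R) : R := chord_tangent x y / Lf g x y.

Definition chord_d11 (x y : R) : R :=
  (Derive (gx g) x ^ 2 + Derive (gy g) x ^ 2
   + (gx g x - gx g y) * Derive (Derive (gx g)) x + (gy g x - gy g y) * Derive (Derive (gy g)) x)
  / Lf g x y - chord_tangent x y ^ 2 / Lf g x y ^ 3.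

Definition chord_d12 (x y : R) : R :=
  (- (Derive (gx g) x * Derive (gx g) y) - Derive (gy g) x * Derive (gy g) y) / Lf g x y
  - chord_tangent x y * chord_tangent y x / Lf g x y ^ 3.

Lemma Lf_sym x y : Lf g x y = Lf g y x.
Proof. unfold Lf, pnorm, dot, psub; simpl. f_equal. ring. Qed.

Lemma Lf_sqrt x y : Lf g x y = sqrt (chord_sq x y).
Proof. reflexivity. Qed.

Lemma Lf_sq x y : Lf g x y * Lf g x y = chord_sq x y.
Proof.
  rewrite Lf_sqrt. apply sqrt_sqrt. unfold chord_sq.
  pose proof (Rle_0_sqr (gx g x - gx g y)). pose proof (Rle_0_sqr (gy g x - gy g y)).
  unfold Rsqr in *. lra.
Qed.

Lemma chord_sq_sym x y : chord_sq x y = chord_sq y x.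
Proof. unfold chord_sq. ring. Qed.

Lemma chord_sq_pos x y : 0 < Rabs (x - y) < 1 -> 0 < chord_sq x y.
Proof.
  intros Hxy. unfold chord_sq.
  destruct (Rle_lt_or_eq_dec 0 _ (Rplus_le_le_0_compat _ _ (Rle_0_sqr (gx g x - gx g y))
                                  (Rle_0_sqr (gy g x - gy g y)))) as [H|H]; [exact H|].
  exfalso. destruct (Rplus_sqr_eq_0 _ _ (eq_sym H)) as [E1 E2].
  assert (E : g x = g y) by (apply pt_eq; unfold gx, gy in *; lra).
  destruct (g_injective _ _ E) as [k Hk]. rewrite Hk, <- abs_IZR in Hxy.
  destruct Hxy as [H1 H2]. apply lt_IZR in H1. apply lt_IZR in H2. lia.
Qed.

Lemma Lf_pos x y : 0 < Rabs (x - y) < 1 -> 0 < Lf g x y.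
Proof. intros H. apply sqrt_lt_R0, chord_sq_pos, H. Qed.

Lemma is_derive_Lf_l x y : 0 < chord_sq x y -> is_derive (fun u => Lf g u y) x (chord_d1 x y).
Proof.
  intros Hp. destruct (gx_C2 x) as (Hx & _). destruct (gy_C2 x) as (Hy & _).
  assert (HS : 0 < sqrt (chord_sq x y)) by (apply sqrt_lt_R0; auto).
  unfold chord_d1, chord_tangent. rewrite Lf_sqrt. unfold chord_sq in *.
  apply (is_derive_ext (fun u => sqrt ((gx g u - gx g y) * (gx g u - gx g y)
                                     + (gy g u - gy g y) * (gy g u - gy g y)))); [reflexivity|].
  auto_derive.
  - repeat split; auto; lra.
  - fold_eta g. set (S := sqrt _) in *. field. lra.
Qed.

Lemma is_derive_Lf_r x y : 0 < chord_sq x y -> is_derive (fun u => Lf g x u) y (chord_d1 y x).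
Proof.
  intros Hp. apply (is_derive_ext (fun u => Lf g u x)); [intros; apply Lf_sym|].
  apply is_derive_Lf_l. now rewrite chord_sq_sym.
Qed.

Lemma is_derive_chord_d1_l x y :
  0 < chord_sq x y -> is_derive (fun u => chord_d1 u y) x (chord_d11 x y).
Proof.
  intros Hp. destruct (gx_C2 x) as (Hx & Hx2 & _). destruct (gy_C2 x) as (Hy & Hy2 & _).
  assert (HS : 0 < sqrt (chord_sq x y)) by (apply sqrt_lt_R0; auto).
  pose proof (sqrt_sqrt (chord_sq x y) (Rlt_le _ _ Hp)) as HSS.
  unfold chord_d11, chord_d1, chord_tangent. rewrite Lf_sqrt. unfold chord_sq in *.
  apply (is_derive_ext (fun u =>
    ((gx g u - gx g y) * Derive (gx g) u + (gy g u - gy g y) * Derive (gy g) u)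
    / sqrt ((gx g u - gx g y) * (gx g u - gx g y) + (gy g u - gy g y) * (gy g u - gy g y))));
    [reflexivity|].
  auto_derive.
  - repeat split; auto; try lra; apply Rgt_not_eq, sqrt_lt_R0; lra.
  - fold_eta g. set (S := sqrt _) in *. field. lra.
Qed.

Lemma is_derive_chord_d1_r x y :
  0 < chord_sq x y -> is_derive (fun u => chord_d1 x u) y (chord_d12 x y).
Proof.
  intros Hp. destruct (gx_C2 y) as (Hx & _). destruct (gy_C2 y) as (Hy & _).
  assert (HS : 0 < sqrt (chord_sq x y)) by (apply sqrt_lt_R0; auto).
  unfold chord_d12, chord_d1, chord_tangent. rewrite Lf_sqrt. unfold chord_sq in *.
  apply (is_derive_ext (fun u =>
    ((gx g x - gx g u) * Derive (gx g) x + (gy g x - gy g u) * Derive (gy g) x)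
    / sqrt ((gx g x - gx g u) * (gx g x - gx g u) + (gy g x - gy g u) * (gy g x - gy g u))));
    [reflexivity|].
  auto_derive.
  - repeat split; auto; try lra; apply Rgt_not_eq, sqrt_lt_R0; lra.
  - fold_eta g. set (S := sqrt _) in *. field. lra.
Qed.

Lemma chord_d12_sym x y : chord_d12 x y = chord_d12 y x.
Proof. unfold chord_d12, Rdiv. rewrite (Lf_sym y x). ring. Qed.

Lemma Derive_Lf_l_loc x y : 0 < Rabs (x - y) < 1 ->
  locally x (fun t => Derive (fun u => Lf g u y) t = chord_d1 t y).
Proof.
  intros H. generalize (locally_sep _ _ H). apply filter_imp. intros t Ht.
  apply is_derive_unique, is_derive_Lf_l, chord_sq_pos, Ht.
Qed.

Lemma d11_Lf x y : 0 < Rabs (x - y) < 1 -> d11 (Lf g) x y = chord_d11 x y.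
Proof.
  intros H. unfold d11. rewrite (Derive_ext_loc _ (fun t => chord_d1 t y)).
  - apply is_derive_unique, is_derive_chord_d1_l, chord_sq_pos, H.
  - exact (Derive_Lf_l_loc _ _ H).
Qed.

Lemma d12_Lf x y : 0 < Rabs (x - y) < 1 -> d12 (Lf g) x y = chord_d12 x y.
Proof.
  intros H. rewrite chord_d12_sym. unfold d12.
  assert (H' : 0 < Rabs (y - x) < 1) by now rewrite Rabs_minus_sym.
  rewrite (Derive_ext_loc _ (fun t => chord_d1 y t)).
  - apply is_derive_unique, is_derive_chord_d1_r, chord_sq_pos, H'.
  - generalize (locally_sep _ _ H). apply filter_imp. intros t Ht.
    rewrite (Derive_ext _ (fun u => Lf g u t)) by (intros; apply Lf_sym).
    apply is_derive_unique, is_derive_Lf_l, chord_sq_pos. now rewrite Rabs_minus_sym.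
Qed.

Lemma d11_Lf_reflect c a b x : 0 < Rabs (c - x - b) < 1 ->
  (forall u, Lf g u a = Lf g (c - u) b) -> d11 (Lf g) x a = d11 (Lf g) (c - x) b.
Proof.
  intros H HF. apply (d11_reflect _ c a b x HF).
  - generalize (locally_sep _ _ H). apply filter_imp. intros t Ht.
    eexists. apply is_derive_Lf_l, chord_sq_pos, Ht.
  - exists (chord_d11 (c - x) b).
    apply (is_derive_ext_loc (fun t => chord_d1 t b)).
    + generalize (Derive_Lf_l_loc _ _ H). apply filter_imp. intros t Ht. now rewrite Ht.
    + apply is_derive_chord_d1_l, chord_sq_pos, H.
Qed.

(* Gradient and Hessian, in the coordinates of [x], of the edge term [L (x a) (x b + c)],
   evaluated at [u = x a] and [v = x b + c]. *)
Definition edge_grad (a b : nat) (u v : R) (k : nat) : R :=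
  (if Nat.eqb a k then chord_d1 u v else 0) + (if Nat.eqb b k then chord_d1 v u else 0).

Definition edge_hess (a b : nat) (u v : R) (j k : nat) : R :=
  (if Nat.eqb a k then (if Nat.eqb a j then chord_d11 u v else 0)
                       + (if Nat.eqb b j then chord_d12 u v else 0) else 0)
  + (if Nat.eqb b k then (if Nat.eqb b j then chord_d11 v u else 0)
                         + (if Nat.eqb a j then chord_d12 u v else 0) else 0).

Lemma is_derive_edge (x : nat -> R) a b c k : a <> b -> 0 < chord_sq (x a) (x b + c) ->
  is_derive (fun t => Lf g (upd x k t a) (upd x k t b + c)) (x k)
    (edge_grad a b (x a) (x b + c) k).
Proof.
  intros Hab H. apply is_derive_upd2; auto.
  - now apply is_derive_Lf_l.
  - now apply is_derive_Lf_r.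
Qed.

Lemma is_derive_edge_grad (x : nat -> R) a b c j k : a <> b -> 0 < chord_sq (x a) (x b + c) ->
  is_derive (fun t => edge_grad a b (upd x j t a) (upd x j t b + c) k) (x j)
    (edge_hess a b (x a) (x b + c) j k).
Proof.
  intros Hab H. unfold edge_grad, edge_hess.
  apply (is_derive_plus
    (fun t => if Nat.eqb a k then chord_d1 (upd x j t a) (upd x j t b + c) else 0)
    (fun t => if Nat.eqb b k then chord_d1 (upd x j t b + c) (upd x j t a) else 0)).
  - destruct (Nat.eqb a k); [|auto_derive; auto].
    apply (is_derive_upd2 chord_d1); auto.
    + now apply is_derive_chord_d1_l.
    + now apply is_derive_chord_d1_r.
  - destruct (Nat.eqb b k); [|auto_derive; auto].
    rewrite Rplus_comm, (chord_d12_sym (x a)).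
    apply (is_derive_upd2 (fun u v => chord_d1 v u)); auto.
    + apply is_derive_chord_d1_r. now rewrite chord_sq_sym.
    + apply is_derive_chord_d1_l. now rewrite chord_sq_sym.
Qed.

Definition edges_sep (p : nat) (q : R) (x : nat -> R) : Prop :=
  forall i, (i < p)%nat ->
    0 < Rabs (x (i + 1)%nat - (x (cyc_succ p (i + 1)) + edge_shift p q i)) < 1.

Lemma partial_Wpq p q y k : (2 <= p)%nat -> edges_sep p q y ->
  partial (Wpq g p q) k y
  = sumR (fun i => edge_grad (i + 1) (cyc_succ p (i + 1)) (y (i + 1)%nat)
                             (y (cyc_succ p (i + 1)) + edge_shift p q i) k) p.
Proof.
  intros Hp Hy. unfold partial.
  rewrite (Derive_ext _ (fun t => sumR (fun i => Lf g (upd y k t (i + 1)%nat)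
                          (upd y k t (cyc_succ p (i + 1)) + edge_shift p q i)) p))
    by (intros; apply Wpq_edges; lia).
  apply is_derive_unique.
  apply (is_derive_sumR (fun i t => Lf g (upd y k t (i + 1)%nat)
                          (upd y k t (cyc_succ p (i + 1)) + edge_shift p q i))).
  intros i Hi. apply is_derive_edge.
  - apply cyc_succ_neq; lia.
  - apply chord_sq_pos, Hy, Hi.
Qed.

Lemma hess_Wpq p q x j k : (2 <= p)%nat ->
  locally (x j) (fun t => edges_sep p q (upd x j t)) ->
  hess (Wpq g p q) x j k
  = sumR (fun i => edge_hess (i + 1) (cyc_succ p (i + 1)) (x (i + 1)%nat)
                             (x (cyc_succ p (i + 1)) + edge_shift p q i) j k) p.
Proof.
  intros Hp Hloc.
  assert (Hx : edges_sep p q x).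
  { intros i Hi. pose proof (locally_singleton _ _ Hloc i Hi) as H. now rewrite !upd_same in H. }
  unfold hess.
  rewrite (Derive_ext_loc _ (fun t => sumR (fun i => edge_grad (i + 1) (cyc_succ p (i + 1))
             (upd x j t (i + 1)%nat) (upd x j t (cyc_succ p (i + 1)) + edge_shift p q i) k) p)).
  - apply is_derive_unique.
    apply (is_derive_sumR (fun i t => edge_grad (i + 1) (cyc_succ p (i + 1))
             (upd x j t (i + 1)%nat) (upd x j t (cyc_succ p (i + 1)) + edge_shift p q i) k)).
    intros i Hi. apply is_derive_edge_grad.
    + apply cyc_succ_neq; lia.
    + apply chord_sq_pos, Hx, Hi.
  - generalize Hloc. apply filter_imp. intros t Ht. now apply partial_Wpq.
Qed.

End ChordLength.

Lemma locally_edges_sep p q x j : (2 <= p)%nat -> edges_sep p q x ->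
  locally (x j) (fun t => edges_sep p q (upd x j t)).
Proof.
  intros Hp Hx. apply locally_forall_lt. intros i Hi.
  pose proof (Hx i Hi) as H. pose proof (cyc_succ_neq p (i + 1) Hp ltac:(lia)) as Hne.
  unfold upd. destruct (Nat.eqb_spec (i + 1) j), (Nat.eqb_spec (cyc_succ p (i + 1)) j).
  - lia.
  - subst j. now apply locally_sep.
  - subst j. set (c := edge_shift p q i) in *.
    assert (H' : 0 < Rabs (x (cyc_succ p (i + 1)) - (x (i + 1)%nat - c)) < 1).
    { replace (x (cyc_succ p (i + 1)) - (x (i + 1)%nat - c))
        with (- (x (i + 1)%nat - (x (cyc_succ p (i + 1)) + c))) by ring.
      now rewrite Rabs_Ropp. }
    generalize (locally_sep _ _ H'). apply filter_imp. intros t Ht.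
    replace (x (i + 1)%nat - (t + c)) with (- (t - (x (i + 1)%nat - c))) by ring.
    now rewrite Rabs_Ropp.
  - now apply filter_forall.
Qed.

(** * Tridiagonal circulant matrices *)

Lemma circ_cyc p a b j k : (2 <= p)%nat -> (1 <= j <= p)%nat -> (1 <= k <= p)%nat ->
  circ p a b j k = (if Nat.eqb j k then 2 * a else 0)
                   + (if Nat.eqb (cyc_succ p k) j then b else 0)
                   + (if Nat.eqb (cyc_succ p j) k then b else 0).
Proof.
  intros Hp Hj Hk. unfold circ.
  replace (Z.eqb ((Z.of_nat j - Z.of_nat k) mod Z.of_nat p) 1) with (Nat.eqb (cyc_succ p k) j).
  - replace (Z.eqb ((Z.of_nat k - Z.of_nat j) mod Z.of_nat p) 1) with (Nat.eqb (cyc_succ p j) k);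
      [reflexivity|].
    apply Bool.eq_true_iff_eq. rewrite Nat.eqb_eq, Z.eqb_eq. now apply cyc_succ_mod.
  - apply Bool.eq_true_iff_eq. rewrite Nat.eqb_eq, Z.eqb_eq. now apply cyc_succ_mod.
Qed.

Lemma cyc_pred_range p k : (2 <= p)%nat -> (1 <= k <= p)%nat -> (1 <= cyc_pred p k <= p)%nat.
Proof. intros Hp Hk. unfold cyc_pred. destruct (Nat.eqb_spec k 1); lia. Qed.

Lemma cyc_succ_range p k : (1 <= k <= p)%nat -> (1 <= cyc_succ p k <= p)%nat.
Proof. intros Hk. unfold cyc_succ. destruct (Nat.eqb_spec k p); lia. Qed.

Lemma sum_edge_hess_circ g p q (x : nat -> R) a b j k :
  (2 <= p)%nat -> (1 <= j <= p)%nat -> (1 <= k <= p)%nat ->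
  (forall i, (i < p)%nat ->
     let u := x (i + 1)%nat in let v := x (cyc_succ p (i + 1)) + edge_shift p q i in
     chord_d11 g u v = a /\ chord_d11 g v u = a /\ chord_d12 g u v = b) ->
  sumR (fun i => edge_hess g (i + 1) (cyc_succ p (i + 1)) (x (i + 1)%nat)
                           (x (cyc_succ p (i + 1)) + edge_shift p q i) j k) p
  = circ p a b j k.
Proof.
  intros Hp Hj Hk Hab.
  set (E1 := fun t => (if Nat.eqb t j then a else 0) + (if Nat.eqb (cyc_succ p t) j then b else 0)).
  set (E2 := fun t => (if Nat.eqb (cyc_succ p t) j then a else 0) + (if Nat.eqb t j then b else 0)).
  rewrite (sumR_ext _ (fun i => (if Nat.eqb (i + 1) k then E1 (i + 1)%nat else 0)
                               + (if Nat.eqb (cyc_succ p (i + 1)) k then E2 (i + 1)%nat else 0))).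
  2:{ intros i Hi. destruct (Hab i Hi) as (H1 & H2 & H3). unfold edge_hess.
      now rewrite H1, H2, H3. }
  set (i0 := (cyc_pred p k - 1)%nat).
  pose proof (cyc_pred_range p k Hp Hk).
  assert (Hi0 : (i0 + 1)%nat = cyc_pred p k) by lia.
  rewrite sumR_plus.
  rewrite (sumR_single _ p (k - 1));
    [| lia | intros i Hi Hne; destruct (Nat.eqb_spec (i + 1) k); [lia | reflexivity]].
  rewrite (sumR_single _ p i0); [| lia |].
  2:{ intros i Hi Hne. destruct (Nat.eqb_spec (cyc_succ p (i + 1)) k) as [E|]; [|reflexivity].
      apply cyc_succ_pred in E; lia. }
  replace (k - 1 + 1)%nat with k by lia. rewrite Hi0, Nat.eqb_refl.
  assert (Hs : cyc_succ p (cyc_pred p k) = k)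
    by (apply cyc_succ_pred; auto; apply cyc_pred_range; auto).
  assert (Hb : Nat.eqb (cyc_pred p k) j = Nat.eqb (cyc_succ p j) k).
  { apply Bool.eq_true_iff_eq. rewrite !Nat.eqb_eq.
    rewrite (cyc_succ_pred p j k); auto. split; auto. }
  rewrite Hs, Nat.eqb_refl. unfold E1, E2. rewrite Hs, Hb, circ_cyc, (Nat.eqb_sym j k); auto.
  destruct (Nat.eqb k j), (Nat.eqb (cyc_succ p k) j), (Nat.eqb (cyc_succ p j) k); ring.
Qed.

Lemma circ_fourier p a b th (h : R -> R) j : (2 <= p)%nat -> (1 <= j <= p)%nat ->
  (forall x, h (x - th) + h (x + th) = 2 * cos th * h x) ->
  (forall x, h (x + th * INR p) = h x) ->
  sumR (fun k => circ p a b j (S k) * h (th * INR (S k))) p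
  = (2 * a + 2 * b * cos th) * h (th * INR j).
Proof.
  intros Hp Hj Hrec Hper.
  rewrite (sumR_ext _ (fun k => (if Nat.eqb j (S k) then 2 * a * h (th * INR (S k)) else 0)
     + (if Nat.eqb (S k) (cyc_pred p j) then b * h (th * INR (S k)) else 0)
     + (if Nat.eqb (S k) (cyc_succ p j) then b * h (th * INR (S k)) else 0))).
  2:{ intros k Hk. rewrite circ_cyc by lia.
      replace (Nat.eqb (cyc_succ p (S k)) j) with (Nat.eqb (S k) (cyc_pred p j)).
      - rewrite (Nat.eqb_sym (cyc_succ p j)).
        destruct (Nat.eqb j (S k)), (Nat.eqb (S k) (cyc_pred p j)), (Nat.eqb (S k) (cyc_succ p j));
          ring.
      - apply Bool.eq_true_iff_eq. rewrite !Nat.eqb_eq. symmetry. apply cyc_succ_pred; lia. }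
  pose proof (cyc_pred_range p j Hp Hj). pose proof (cyc_succ_range p j Hj).
  rewrite !sumR_plus, (sumR_single _ p (j - 1)), (sumR_single _ p (cyc_pred p j - 1)),
    (sumR_single _ p (cyc_succ p j - 1)); try lia.
  - replace (S (j - 1)) with j by lia. replace (S (cyc_pred p j - 1)) with (cyc_pred p j) by lia.
    replace (S (cyc_succ p j - 1)) with (cyc_succ p j) by lia. rewrite !Nat.eqb_refl.
    replace (h (th * INR (cyc_pred p j))) with (h (th * INR j - th)).
    2:{ unfold cyc_pred. destruct (Nat.eqb_spec j 1) as [->|].
        - rewrite <- (Hper (th * INR 1 - th)). f_equal. simpl. ring.
        - rewrite minus_INR by lia. f_equal. simpl. ring. }
    replace (h (th * INR (cyc_succ p j))) with (h (th * INR j + th)).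
    2:{ unfold cyc_succ. destruct (Nat.eqb_spec j p) as [->|].
        - rewrite <- (Hper (th * INR 1)). f_equal. simpl. ring.
        - rewrite S_INR. f_equal. ring. }
    transitivity (2 * a * h (th * INR j) + b * (h (th * INR j - th) + h (th * INR j + th)));
      [ring|].
    rewrite Hrec. ring.
  - intros k Hk Hne. destruct (Nat.eqb_spec (S k) (cyc_succ p j)); [lia | reflexivity].
  - intros k Hk Hne. destruct (Nat.eqb_spec (S k) (cyc_pred p j)); [lia | reflexivity].
  - intros k Hk Hne. destruct (Nat.eqb_spec j (S k)); [lia | reflexivity].
Qed.

(** * Arithmetic structure of symmetric orbits *)

Definition eq_mod1 (a b : R) : Prop := exists z : Z, a - b = IZR z.

Lemma IZR_strip_0 (z : Z) : -1 < IZR z < 1 -> z = 0%Z.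
Proof. intros [H1 H2]. apply lt_IZR in H1. apply lt_IZR in H2. lia. Qed.

Lemma IZR_not_in_01 (z : Z) : ~ (0 < IZR z < 1).
Proof. intros [H1 H2]. apply lt_IZR in H1. apply lt_IZR in H2. lia. Qed.

Lemma eq_mod1_eq a b : eq_mod1 a b -> -1 < a - b < 1 -> a = b.
Proof. intros [z Hz] H. rewrite Hz in H. apply IZR_strip_0 in H. subst. simpl in Hz. lra. Qed.

Lemma shift_translation_of_eq_mod1 (X : Z -> R) k e :
  (forall i, 0 < X (i + 1)%Z - X i < 1) ->
  (forall i, eq_mod1 (X (k + i)%Z) (X i + e)) -> forall i, X (i + k)%Z = X i + (X k - X 0%Z).
Proof.
  intros X_incr Hc.
  enough (H : forall i, X (k + i)%Z - X i = X (k + 0)%Z - X 0%Z).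
  { intros i. specialize (H i). rewrite Z.add_0_r, Z.add_comm in H. lra. }
  apply (Z_bi_ind (fun i => X (k + i)%Z - X i = X (k + 0)%Z - X 0%Z)); [reflexivity|].
  intros i. enough (E : X (k + (i + 1))%Z - X (i + 1)%Z = X (k + i)%Z - X i) by (rewrite E; tauto).
  apply eq_mod1_eq.
  - destruct (Hc (i + 1)%Z) as [z1 H1], (Hc i) as [z2 H2].
    exists (z1 - z2)%Z. rewrite minus_IZR. lra.
  - pose proof (X_incr i). pose proof (X_incr (k + i)%Z).
    replace (k + (i + 1))%Z with (k + i + 1)%Z by lia. lra.
Qed.

Section OrbitStep.

Variables (m n : nat) (X : Z -> R).
Hypothesis X_incr : forall i, 0 < X (i + 1)%Z - X i < 1.
Hypothesis X_period : in_Xpq (Z.of_nat n) (INR m) X.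
Hypothesis n_ge2 : (2 <= n)%nat.

Lemma step_of_translation k E :
  (forall i, X (i + k)%Z = X i + E) -> eq_mod1 E (1 / INR n) ->
  forall i, X (i + 1)%Z = X i + INR m / INR n.
Proof using X_period n_ge2.
  intros HE [z0 Hz0].
  assert (Hn : 0 < INR n) by (apply lt_0_INR; lia).
  set (nz := Z.of_nat n) in *. set (G := Z.gcd k nz).
  destruct (Zis_gcd_bezout _ _ _ (Zgcd_is_gcd k nz)) as [u v Huv].
  set (h := IZR u * E + IZR v * INR m).
  assert (HG : forall i, X (i + G)%Z = X i + h).
  { intros i. fold G in Huv. rewrite <- Huv.
    replace (i + (u * k + v * nz))%Z with (i + u * k + v * nz)%Z by lia.
    rewrite (iter_shift X nz (INR m) X_period), (iter_shift X k E HE). unfold h. ring. }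
  destruct (Z.gcd_divide_r k nz) as [n' Hn']. destruct (Z.gcd_divide_l k nz) as [k' Hk'].
  fold G in Hn', Hk'.
  assert (Hnh : IZR n' * h = INR m).
  { pose proof (iter_shift X G h HG n' 0%Z) as H1. rewrite <- Hn', X_period in H1. lra. }
  assert (HEh : E = IZR k' * h).
  { pose proof (iter_shift X G h HG k' 0%Z) as H1. rewrite <- Hk', HE in H1. lra. }
  assert (HnG : INR n = IZR n' * IZR G)
    by (rewrite INR_IZR_INZ; fold nz; rewrite Hn', mult_IZR; ring).
  assert (HG0 : (0 < G)%Z).
  { assert (0 <= G)%Z by apply Z.gcd_nonneg. destruct (Z.eq_dec G 0) as [H0|]; [|lia].
    apply Z.gcd_eq_0_r in H0. unfold nz in H0. lia. }
  assert (Hn'0 : IZR n' <> 0) by (intro Hc; rewrite Hc in HnG; lra).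
  (* [E = 1/n mod 1] and [E = k' h] force [1/G] to be an integer. *)
  assert (HG1 : G = 1%Z).
  { assert (Hw : / IZR G = IZR (k' * Z.of_nat m - n' * z0)).
    { rewrite minus_IZR, !mult_IZR, <- INR_IZR_INZ, <- Hnh.
      replace (IZR z0) with (E - 1 / INR n) by lra. rewrite HEh, HnG. field.
      split; [apply not_0_IZR; lia | exact Hn'0]. }
    destruct (Z.eq_dec G 1) as [|HG2]; auto. exfalso.
    assert (2 <= IZR G) by (apply IZR_le; lia).
    apply (IZR_not_in_01 (k' * Z.of_nat m - n' * z0)). rewrite <- Hw. split.
    - apply Rinv_0_lt_compat; lra.
    - rewrite <- Rinv_1. apply Rinv_lt_contravar; lra. }
  intros i. rewrite HG1 in HG, HnG. rewrite HG, HnG, <- Hnh. f_equal. field. exact Hn'0.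
Qed.

Lemma reversal_forces_n2 k :
  (forall i, eq_mod1 (X (k - i)%Z) (X i + 1 / INR n)) -> n = 2%nat.
Proof using n_ge2.
  intros Hc.
  assert (Hnr : 2 <= INR n) by (replace 2 with (INR 2) by (simpl; ring); apply le_INR; lia).
  (* The reversal swaps [X 0] and [X k], so two rotations by [2 pi / n] fix [X 0]. *)
  destruct (Hc 0%Z) as [z1 H1], (Hc k) as [z2 H2].
  rewrite Z.sub_diag in H2. rewrite Z.sub_0_r in H1.
  assert (H3 : 2 / INR n = IZR (- (z1 + z2))) by (rewrite opp_IZR, plus_IZR; lra).
  assert (H4 : 0 < 2 / INR n <= 1).
  { split; [apply Rdiv_lt_0_compat; lra|].
    apply (Rmult_le_reg_r (INR n)); [lra|]. unfold Rdiv. rewrite Rmult_assoc, Rinv_l; lra. }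
  destruct (Rle_lt_or_eq_dec _ _ (proj2 H4)) as [H6|H6].
  - exfalso. apply (IZR_not_in_01 (- (z1 + z2))). lra.
  - apply INR_eq. simpl. apply (Rmult_eq_reg_r (/ INR n)); [|apply Rinv_neq_0_compat; lra].
    rewrite Rinv_r by lra. unfold Rdiv in H6. lra.
Qed.

Lemma step_of_reversal k : (1 <= m <= n - 1)%nat ->
  (forall i, eq_mod1 (X (k - i)%Z) (X i + 1 / INR n)) ->
  forall i, X (i + 1)%Z = X i + INR m / INR n.
Proof.
  intros Hm Hc. pose proof (reversal_forces_n2 k Hc) as Hn2.
  subst n. assert (Hm1 : m = 1%nat) by lia. subst m.
  change (INR 2) with 2 in *. change (INR 1) with 1 in *.
  set (d := fun i => X (i + 1)%Z - X i).
  assert (Hdd : forall i, d i + d (i + 1)%Z = 1).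
  { intros i. unfold d. replace (i + 1 + 1)%Z with (i + Z.of_nat 2)%Z by (simpl; lia).
    rewrite X_period. change (INR 1) with 1. ring. }
  assert (Hsum : forall i, d (k - i - 1)%Z + d i = 1).
  { intros i. destruct (Hc i) as [z1 H1], (Hc (i + 1)%Z) as [z2 H2].
    replace (k - (i + 1))%Z with (k - i - 1)%Z in H2 by lia.
    pose proof (X_incr i). pose proof (X_incr (k - i - 1)%Z).
    unfold d. replace (k - i - 1 + 1)%Z with (k - i)%Z in * by lia.
    assert (E : (z1 - z2 = 1)%Z).
    { assert (Hz : 0 < IZR (z1 - z2) < 2) by (rewrite minus_IZR; lra).
      destruct Hz as [Ha Hb]. apply lt_IZR in Ha. apply lt_IZR in Hb. lia. }
    apply (f_equal IZR) in E. rewrite minus_IZR in E. lra. }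
  (* Consecutive increments add up to [1]; for odd [k = 2 w + 1] the reversal maps the
     edge [(w, w + 1)] to itself, which pins its increment to [1/2]. *)
  destruct (Z.Even_or_Odd k) as [[w Hw] | [w Hw]].
  - exfalso. destruct (Hc w) as [z Hz]. replace (k - w)%Z with w in Hz by lia.
    apply (IZR_not_in_01 (- z)). rewrite opp_IZR. lra.
  - assert (Hw2 : d w = 1 / 2).
    { pose proof (Hsum w) as H. replace (k - w - 1)%Z with w in H by lia. lra. }
    assert (Hall : forall i, d i = d w).
    { intros i. replace i with (w + (i - w))%Z by lia. generalize (i - w)%Z. clear i.
      apply (Z_bi_ind (fun j => d (w + j)%Z = d w)); [now rewrite Z.add_0_r|].
      intros j. pose proof (Hdd (w + j)%Z). replace (w + (j + 1))%Z with (w + j + 1)%Z by lia.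
      split; intros; lra. }
    intros i. pose proof (Hall i) as H. rewrite Hw2 in H. unfold d in H. lra.
Qed.

End OrbitStep.

Section SymmetricOrbit.

Variables (m n : nat) (g : R -> pt) (X : Z -> R).
Hypothesis n_ge2 : (2 <= n)%nat.
Hypothesis g_injective : forall s t, g s = g t -> exists k : Z, s - t = IZR k.
Hypothesis g_rotation : forall t, g (t + 1 / INR n) = rot (2 * PI / INR n) (g t).
Hypothesis g_reflection : forall t, g (- t) = reflS (g t).
Hypothesis X_incr : forall i, 0 < X (i + 1)%Z - X i < 1.
Hypothesis X_period : in_Xpq (Z.of_nat n) (INR m) X.
Hypothesis X_sym : dn_symmetric n g X.

Lemma orbit_step : (1 <= m <= n - 1)%nat -> forall i, X (i + 1)%Z = X i + INR m / INR n.
Proof using n_ge2 g_injective g_rotation X_incr X_period X_sym.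
  intros Hm.
  assert (Hrot : forall a b, dn_act n 1 false (g b) = g a -> eq_mod1 a (b + 1 / INR n)).
  { intros a b H. unfold dn_act in H. rewrite Rmult_1_r, <- g_rotation in H.
    destruct (g_injective _ _ H) as [z Hz]. exists (- z)%Z. rewrite opp_IZR. lra. }
  destruct (X_sym 1%nat false) as [k [Hk | Hk]].
  - apply (step_of_translation m n X X_period n_ge2 k (X k - X 0%Z)).
    + apply (shift_translation_of_eq_mod1 X k (1 / INR n) X_incr). intros i. now apply Hrot.
    + destruct (Hrot _ _ (Hk 0%Z)) as [z Hz]. exists z. rewrite Z.add_0_r in Hz. lra.
  - apply (step_of_reversal m n X X_incr X_period n_ge2 k Hm). intros i. now apply Hrot.
Qed.

Hypothesis X_step : forall i, X (i + 1)%Z = X i + INR m / INR n.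

Lemma orbit_arith i : X i = X 0%Z + IZR i * (INR m / INR n).
Proof using X_step.
  pose proof (iter_shift X 1 _ X_step i 0%Z) as E. now rewrite Z.mul_1_r, Z.add_0_l in E.
Qed.

(* The reflection [S] of [D_n] makes each [X i] a center of symmetry of the curve. *)
Lemma orbit_center i : exists z a : Z, 2 * X i = IZR z + IZR a / INR n.
Proof using n_ge2 g_injective g_reflection X_sym X_step.
  assert (Hn : 0 < INR n) by (apply lt_0_INR; lia).
  destruct (X_sym 0%nat true) as [k Hk].
  assert (H : g (X k) = g (- X 0%Z)).
  { rewrite g_reflection.
    assert (Hact : forall z, dn_act n 0 true z = reflS z).
    { intros z. unfold dn_act. replace (2 * PI * INR 0 / INR n) with 0 by (simpl; field; lra).
      apply rot_0. }
    destruct Hk as [Hk | Hk]; specialize (Hk 0%Z); rewrite Hact in Hk; rewrite Hk;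
      f_equal; f_equal; lia. }
  destruct (g_injective _ _ H) as [z Hz].
  exists z, ((2 * i - k) * Z.of_nat m)%Z.
  rewrite mult_IZR, minus_IZR, mult_IZR, <- INR_IZR_INZ, (orbit_arith i).
  rewrite (orbit_arith k) in Hz.
  replace ((2 * IZR i - IZR k) * INR m / INR n) with ((2 * IZR i - IZR k) * (INR m / INR n))
    by (field; lra).
  set (r := INR m / INR n) in *. nra.
Qed.

End SymmetricOrbit.

(** * Constant-speed parametrisations *)

Lemma cross_chord_rot (z v : pt) (ph s c : R) :
  cos ph = 1 - 2 * s ^ 2 -> 0 < s -> dot z v = 0 -> pnorm v = c ->
  cross v (psub (rot ph z) z) > 0 ->
  cross v (psub (rot ph z) z) = c * pnorm (psub (rot ph z) z) * s /\
  cross v (psub z (rot (- ph) z)) = - c * pnorm (psub z (rot (- ph) z)) * s.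
Proof.
  destruct z as [z1 z2], v as [v1 v2]. unfold cross, psub, rot, dot, pnorm in *; simpl in *.
  intros Hc Hs Hd Hv Hx. rewrite cos_neg, sin_neg.
  pose proof (sin2_cos2 ph) as Hsc. unfold Rsqr in Hsc.
  set (C := cos ph) in *. set (S := sin ph) in *.
  set (K := v1 * z2 - v2 * z1).
  assert (E1 : v1 * (S * z1 + C * z2 - z2) - v2 * (C * z1 - S * z2 - z1) = (C - 1) * K).
  { unfold K. transitivity (S * (z1 * v1 + z2 * v2) + (C - 1) * (v1 * z2 - v2 * z1)); [ring|].
    rewrite Hd. ring. }
  assert (E2 : v1 * (z2 - (- S * z1 + C * z2)) - v2 * (z1 - (C * z1 - - S * z2)) = - ((C - 1) * K)).
  { unfold K. transitivity (- (- S * (z1 * v1 + z2 * v2) + (C - 1) * (v1 * z2 - v2 * z1))); [ring|].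
    rewrite Hd. ring. }
  rewrite E1 in *. rewrite E2.
  assert (HK : K < 0) by (rewrite Hc in Hx; nra).
  assert (HK2 : K * K = (v1 * v1 + v2 * v2) * (z1 * z1 + z2 * z2)).
  { unfold K.
    transitivity ((v1 * v1 + v2 * v2) * (z1 * z1 + z2 * z2) - (z1 * v1 + z2 * v2) ^ 2); [ring|].
    rewrite Hd. ring. }
  assert (Hr : (S * S + C * C) * (z1 * z1 + z2 * z2) - 2 * C * (z1 * z1 + z2 * z2)
               + (z1 * z1 + z2 * z2) = 4 * s ^ 2 * (z1 * z1 + z2 * z2))
    by (rewrite Hsc, Hc; ring).
  assert (Q1 : (C * z1 - S * z2 - z1) * (C * z1 - S * z2 - z1)
               + (S * z1 + C * z2 - z2) * (S * z1 + C * z2 - z2)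
               = 4 * s ^ 2 * (z1 * z1 + z2 * z2)) by (rewrite <- Hr; ring).
  assert (Q2 : (z1 - (C * z1 - - S * z2)) * (z1 - (C * z1 - - S * z2))
               + (z2 - (- S * z1 + C * z2)) * (z2 - (- S * z1 + C * z2))
               = 4 * s ^ 2 * (z1 * z1 + z2 * z2)) by (rewrite <- Hr; ring).
  unfold dot in *; cbn [fst snd] in *. rewrite Q1, Q2.
  assert (HL : sqrt (4 * s ^ 2 * (z1 * z1 + z2 * z2)) * c = - 2 * s * K).
  { rewrite <- Hv, <- sqrt_mult_alt by nra.
    replace (4 * s ^ 2 * (z1 * z1 + z2 * z2) * (v1 * v1 + v2 * v2)) with ((- 2 * s * K) ^ 2)
      by (replace ((- 2 * s * K) ^ 2) with (4 * s ^ 2 * (K * K)) by ring; rewrite HK2; ring).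
    apply sqrt_pow2. nra. }
  rewrite Hc. split; nra.
Qed.

Lemma dot_tangent_center g C x0 : C2 (gx g) -> C2 (gy g) ->
  (forall t, dot (g (C - t)) (g (C - t)) = dot (g t) (g t)) -> 2 * x0 = C ->
  dot (g x0) (dvel g x0) = 0.
Proof.
  intros Cx Cy Hf HC.
  destruct (Cx x0) as (H1 & _), (Cy x0) as (H3 & _).
  assert (Hx : C - x0 = x0) by lra.
  (* [t |-> |g t|^2] is even about [x0], so its derivative vanishes there. *)
  assert (D1 : is_derive (fun t => gx g t * gx g t + gy g t * gy g t) x0
     (2 * (gx g x0 * Derive (gx g) x0 + gy g x0 * Derive (gy g) x0))).
  { auto_derive; auto. fold_eta g. ring. }
  assert (D2 : is_derive (fun t => gx g (C - t) * gx g (C - t) + gy g (C - t) * gy g (C - t)) x0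
     (- (2 * (gx g (C - x0) * Derive (gx g) (C - x0) + gy g (C - x0) * Derive (gy g) (C - x0))))).
  { auto_derive.
    - replace (C + - x0) with x0 by lra. tauto.
    - fold_eta g. replace (C + - x0) with x0 by lra. ring. }
  rewrite Hx in D2. apply (is_derive_ext _ (fun t => gx g t * gx g t + gy g t * gy g t)) in D2;
    [| intros t; exact (Hf t)].
  pose proof (is_derive_unique _ _ _ D1) as U1. pose proof (is_derive_unique _ _ _ D2) as U2.
  unfold dot, dvel; simpl. unfold gx, gy in U1, U2 |- *. lra.
Qed.

Section ConstantSpeed.

Variables (g : R -> pt) (c : R).
Hypothesis gx_C2 : C2 (gx g).
Hypothesis gy_C2 : C2 (gy g).
Hypothesis g_speed : forall t, pnorm (dvel g t) = c.

Lemma speed_sq t : Derive (gx g) t * Derive (gx g) t + Derive (gy g) t * Derive (gy g) t = c * c.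
Proof. rewrite <- (g_speed t), <- dot_self_pnorm. reflexivity. Qed.

Lemma speed_pos : (forall t, dvel g t <> (0, 0)) -> 0 < c.
Proof.
  intros Himm. assert (0 <= c) by (rewrite <- (g_speed 0); apply sqrt_pos).
  destruct (Rle_lt_or_eq_dec _ _ H) as [|E]; auto. exfalso. apply (Himm 0).
  pose proof (speed_sq 0) as Hs. rewrite <- E in Hs. unfold dvel. apply pt_eq; simpl; nra.
Qed.

Lemma vel_dot_acc t :
  Derive (gx g) t * Derive (Derive (gx g)) t + Derive (gy g) t * Derive (Derive (gy g)) t = 0.
Proof.
  destruct (gx_C2 t) as (_ & H2 & _), (gy_C2 t) as (_ & H4 & _).
  set (f := fun u => Derive (gx g) u * Derive (gx g) u + Derive (gy g) u * Derive (gy g) u).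
  assert (D1 : is_derive f t
     (2 * (Derive (gx g) t * Derive (Derive (gx g)) t
           + Derive (gy g) t * Derive (Derive (gy g)) t))).
  { unfold f. auto_derive; auto. fold_eta g. ring. }
  assert (D2 : is_derive f t 0).
  { apply (is_derive_ext (fun _ => c * c)); [intros; unfold f; now rewrite speed_sq|].
    auto_derive; auto. }
  pose proof (is_derive_unique _ _ _ D1). pose proof (is_derive_unique _ _ _ D2). lra.
Qed.

Lemma chord_d11_const_speed x y s : 0 < c -> 0 < Lf g x y ->
  cross (dvel g x) (psub (g y) (g x)) = c * Lf g x y * s ->
  chord_d11 g x y = c ^ 2 * s * (s / Lf g x y - kappa g x).
Proof.
  intros Hc HL HCW.
  pose proof (speed_sq x) as Hv2. pose proof (vel_dot_acc x) as Hva.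
  pose proof (Lf_sq g x y) as HL2.
  unfold chord_d11, chord_tangent, kappa. rewrite g_speed.
  unfold cross, dvel, psub in HCW. simpl in HCW. unfold chord_sq in HL2.
  change (fst (g x)) with (gx g x) in *. change (fst (g y)) with (gx g y) in *.
  change (snd (g x)) with (gy g x) in *. change (snd (g y)) with (gy g y) in *.
  set (L := Lf g x y) in *.
  set (v1 := Derive (gx g) x) in *. set (v2 := Derive (gy g) x) in *.
  set (a1 := Derive (Derive (gx g)) x) in *. set (a2 := Derive (Derive (gy g)) x) in *.
  set (w1 := gx g x - gx g y) in *. set (w2 := gy g x - gy g y) in *.
  (* Decompose along the unit tangent and normal, using [v . a = 0] and [|v| = c]. *)
  assert (HCW' : v1 * w2 - v2 * w1 = - (c * L * s)).
  { rewrite <- HCW. unfold w1, w2. ring. }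
  set (CA := v1 * a2 - v2 * a1).
  assert (H1 : c * c * (w1 * a1 + w2 * a2) = (v1 * w2 - v2 * w1) * CA).
  { rewrite <- Hv2. unfold CA.
    transitivity ((v1 * w1 + v2 * w2) * (v1 * a1 + v2 * a2)
                  + (v1 * w2 - v2 * w1) * (v1 * a2 - v2 * a1)); [ring|].
    rewrite Hva. ring. }
  assert (H2 : (w1 * v1 + w2 * v2) ^ 2 = c * c * (L * L) - (v1 * w2 - v2 * w1) ^ 2).
  { rewrite <- Hv2, HL2. unfold w1, w2. ring. }
  assert (E1 : w1 * a1 + w2 * a2 = (v1 * w2 - v2 * w1) * CA / (c * c))
    by (rewrite <- H1; field; lra).
  replace (v1 ^ 2 + v2 ^ 2 + w1 * a1 + w2 * a2) with (c * c + (v1 * w2 - v2 * w1) * CA / (c * c))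
    by (rewrite <- E1, <- Hv2; ring).
  rewrite H2, HCW'. field. lra.
Qed.

Lemma chord_d12_const_speed x y s : 0 < Lf g x y ->
  cross (dvel g x) (psub (g y) (g x)) = c * Lf g x y * s ->
  cross (dvel g y) (psub (g y) (g x)) = - c * Lf g x y * s ->
  chord_d12 g x y = c ^ 2 * s ^ 2 / Lf g x y.
Proof.
  intros HL H1 H2.
  pose proof (Lf_sq g x y) as HL2.
  unfold chord_d12, chord_tangent. unfold cross, dvel, psub in H1, H2. simpl in H1, H2.
  unfold chord_sq in HL2.
  change (fst (g x)) with (gx g x) in *. change (fst (g y)) with (gx g y) in *.
  change (snd (g x)) with (gy g x) in *. change (snd (g y)) with (gy g y) in *.
  set (L := Lf g x y) in *.
  set (p1 := Derive (gx g) x) in *. set (p2 := Derive (gy g) x) in *.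
  set (q1 := Derive (gx g) y) in *. set (q2 := Derive (gy g) y) in *.
  (* Lagrange's identity turns the numerator into a product of two cross products. *)
  assert (E : (- (p1 * q1) - p2 * q2) / L
              - ((gx g x - gx g y) * p1 + (gy g x - gy g y) * p2)
                * ((gx g y - gx g x) * q1 + (gy g y - gy g x) * q2) / L ^ 3
            = - ((p1 * (gy g y - gy g x) - p2 * (gx g y - gx g x))
                 * (q1 * (gy g y - gy g x) - q2 * (gx g y - gx g x))) / L ^ 3).
  { replace ((- (p1 * q1) - p2 * q2) / L) with ((- (p1 * q1) - p2 * q2) * (L * L) / L ^ 3)
      by (field; lra).
    rewrite HL2. field. lra. }
  rewrite E, H1, H2. field. lra.
Qed.

End ConstantSpeed.

(** * Second derivatives along the orbit *)

Section OrbitCalculus.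

Variables (m n : nat) (g : R -> pt) (X : Z -> R).
Hypothesis m_range : (1 <= m <= n - 1)%nat.
Hypothesis gx_C2 : C2 (gx g).
Hypothesis gy_C2 : C2 (gy g).
Hypothesis g_injective : forall s t, g s = g t -> exists k : Z, s - t = IZR k.
Hypothesis g_periodic : forall t, g (t + 1) = g t.
Hypothesis g_rotation : forall t, g (t + 1 / INR n) = rot (2 * PI / INR n) (g t).
Hypothesis g_reflection : forall t, g (- t) = reflS (g t).
Hypothesis X_step : forall i, X (i + 1)%Z = X i + INR m / INR n.
Hypothesis X_center : forall i, exists z a : Z, 2 * X i = IZR z + IZR a / INR n.

Lemma orbit_gap : 0 < INR m / INR n < 1.
Proof using m_range.
  assert (1 <= INR m) by (apply (le_INR 1); lia).
  assert (INR m + 1 <= INR n) by (rewrite <- S_INR; apply le_INR; lia).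
  split; [apply Rdiv_lt_0_compat; lra|].
  apply (Rmult_lt_reg_r (INR n)); [lra|]. unfold Rdiv. rewrite Rmult_assoc, Rinv_l; lra.
Qed.

Lemma orbit_sep i j : (j = i + 1)%Z -> 0 < Rabs (X i - X j) < 1.
Proof using m_range X_step.
  intros ->. rewrite X_step. replace (X i - (X i + INR m / INR n)) with (- (INR m / INR n)) by ring.
  rewrite Rabs_Ropp, Rabs_pos_eq; pose proof orbit_gap; lra.
Qed.

Lemma orbit_translate i : X i = X 0%Z + IZR (i * Z.of_nat m) / INR n.
Proof using m_range X_step.
  rewrite (orbit_arith m n X X_step i), mult_IZR, <- INR_IZR_INZ. field.
  apply not_0_INR. lia.
Qed.

Lemma orbit_d11 i : d11 (Lf g) (X i) (X (i + 1)%Z) = d11 (Lf g) (X 0%Z) (X 1%Z).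
Proof using m_range g_rotation X_step.
  rewrite (orbit_translate i), (orbit_translate (i + 1)), (orbit_translate 1).
  replace ((i + 1) * Z.of_nat m)%Z with (i * Z.of_nat m + 1 * Z.of_nat m)%Z by lia.
  rewrite plus_IZR, Rdiv_plus_distr.
  replace (X 0%Z + (IZR (i * Z.of_nat m) / INR n + IZR (1 * Z.of_nat m) / INR n))
    with (X 0%Z + IZR (1 * Z.of_nat m) / INR n + IZR (i * Z.of_nat m) / INR n) by ring.
  apply d11_translate. intros x y. apply Lf_translate; auto. lia.
Qed.

Lemma orbit_d12 i : d12 (Lf g) (X i) (X (i + 1)%Z) = d12 (Lf g) (X 0%Z) (X 1%Z).
Proof using m_range g_rotation X_step.
  rewrite (orbit_translate i), (orbit_translate (i + 1)), (orbit_translate 1).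
  replace ((i + 1) * Z.of_nat m)%Z with (i * Z.of_nat m + 1 * Z.of_nat m)%Z by lia.
  rewrite plus_IZR, Rdiv_plus_distr.
  replace (X 0%Z + (IZR (i * Z.of_nat m) / INR n + IZR (1 * Z.of_nat m) / INR n))
    with (X 0%Z + IZR (1 * Z.of_nat m) / INR n + IZR (i * Z.of_nat m) / INR n) by ring.
  apply d12_translate. intros x y. apply Lf_translate; auto. lia.
Qed.

(* Reflecting through the center [X i] swaps [X (i - 1)] and [X (i + 1)]. *)
Lemma orbit_d11_back i : d11 (Lf g) (X i) (X (i - 1)%Z) = d11 (Lf g) (X 0%Z) (X 1%Z).
Proof using m_range gx_C2 gy_C2 g_injective g_periodic g_rotation g_reflection X_step X_center.
  destruct (X_center i) as [z [a Hc]]. set (C := IZR z + IZR a / INR n) in Hc.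
  assert (Hprev : X (i - 1)%Z = X i - INR m / INR n)
    by (pose proof (X_step (i - 1)) as H; replace (i - 1 + 1)%Z with i in H by lia; lra).
  assert (HCi : C - X i = X i) by lra.
  rewrite (d11_Lf_reflect g gx_C2 gy_C2 g_injective C (X (i - 1)%Z) (X (i + 1)%Z) (X i)), HCi.
  - apply orbit_d11.
  - rewrite HCi. now apply orbit_sep.
  - intros u. unfold C.
    rewrite <- (Lf_reflect n g ltac:(lia) g_periodic g_rotation g_reflection z a u).
    fold C. f_equal. rewrite X_step, Hprev. lra.
Qed.

Lemma orbit_d22 i : d22 (Lf g) (X (i - 1)%Z) (X i) = d11 (Lf g) (X 0%Z) (X 1%Z).
Proof using m_range gx_C2 gy_C2 g_injective g_periodic g_rotation g_reflection X_step X_center.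
  rewrite d22_swap by apply Lf_sym. apply orbit_d11_back.
Qed.

Lemma vecX_edge s i : let p := (s * n)%nat in (i < p)%nat ->
  vecX X (i + 1)%nat = X (Z.of_nat i + 1)%Z /\
  vecX X (cyc_succ p (i + 1)) + edge_shift p (INR (s * m)) i = X (Z.of_nat i + 2)%Z.
Proof using m_range X_step.
  intros p Hi. unfold vecX. split; [f_equal; lia|].
  unfold cyc_succ, edge_shift. destruct (Nat.eqb_spec (i + 1) p) as [E|E].
  - rewrite (orbit_arith m n X X_step (Z.of_nat 1)), (orbit_arith m n X X_step (Z.of_nat i + 2)).
    rewrite plus_IZR, <- !INR_IZR_INZ, mult_INR.
    replace (INR i) with (INR s * INR n - 1)
      by (rewrite <- mult_INR; fold p; rewrite <- E, plus_INR; simpl; ring).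
    simpl. field. apply not_0_INR. lia.
  - rewrite Rplus_0_r. f_equal. lia.
Qed.

Lemma hess_Wpq_orbit s : (1 <= s)%nat ->
  let p := (s * n)%nat in forall j k, (1 <= j <= p)%nat -> (1 <= k <= p)%nat ->
  hess (Wpq g p (INR (s * m))) (vecX X) j k
  = circ p (d11 (Lf g) (X 0%Z) (X 1%Z)) (d12 (Lf g) (X 0%Z) (X 1%Z)) j k.
Proof using m_range gx_C2 gy_C2 g_injective g_periodic g_rotation g_reflection X_step X_center.
  intros Hs p j k Hj Hk. unfold p in *.
  assert (Hp : (2 <= s * n)%nat) by nia.
  assert (Hsep : edges_sep (s * n) (INR (s * m)) (vecX X)).
  { intros i Hi. destruct (vecX_edge s i Hi) as [-> ->]. apply orbit_sep. lia. }
  rewrite (hess_Wpq g gx_C2 gy_C2 g_injective) by (auto; now apply locally_edges_sep).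
  apply sum_edge_hess_circ; auto.
  intros i Hi. destruct (vecX_edge s i Hi) as [-> ->].
  assert (Hi1 : (Z.of_nat i + 2 = Z.of_nat i + 1 + 1)%Z) by lia.
  assert (Hi2 : (Z.of_nat i + 1 = Z.of_nat i + 2 - 1)%Z) by lia.
  split; [|split].
  - rewrite <- (d11_Lf g gx_C2 gy_C2 g_injective) by (apply orbit_sep; lia).
    rewrite Hi1. apply orbit_d11.
  - rewrite <- (d11_Lf g gx_C2 gy_C2 g_injective).
    + rewrite Hi2. apply orbit_d11_back.
    + rewrite Rabs_minus_sym. apply orbit_sep. lia.
  - rewrite <- (d12_Lf g gx_C2 gy_C2 g_injective) by (apply orbit_sep; lia).
    rewrite Hi1. apply orbit_d12.
Qed.

Lemma orbit_rot j : g (X (j + 1)%Z) = rot (2 * PI * INR m / INR n) (g (X j)).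
Proof using m_range g_rotation X_step.
  rewrite X_step, (INR_IZR_INZ m). apply g_add_frac; auto. lia.
Qed.

Lemma orbit_perp j : dot (g (X j)) (dvel g (X j)) = 0.
Proof using m_range gx_C2 gy_C2 g_periodic g_rotation g_reflection X_center.
  destruct (X_center j) as [z [a Hza]].
  apply (dot_tangent_center g (IZR z + IZR a / INR n)); auto.
  intros t. apply dot_self_reflect; auto. lia.
Qed.

(* Each chord of the orbit makes the angle [m pi / n] with the tangents at its ends. *)
Lemma orbit_cross_chord c j : (forall t, pnorm (dvel g t) = c) ->
  (forall s t, (forall k : Z, s - t <> IZR k) -> cross (dvel g t) (psub (g s) (g t)) > 0) ->
  let s := sin (INR m * PI / INR n) in
  cross (dvel g (X j)) (psub (g (X (j + 1)%Z)) (g (X j)))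
    = c * Lf g (X j) (X (j + 1)%Z) * s /\
  cross (dvel g (X (j + 1)%Z)) (psub (g (X (j + 1)%Z)) (g (X j)))
    = - c * Lf g (X j) (X (j + 1)%Z) * s.
Proof using m_range gx_C2 gy_C2 g_periodic g_rotation g_reflection X_step X_center.
  intros Hspeed Hconv s.
  pose proof orbit_gap as Hgap. pose proof PI_RGT_0.
  assert (Hs : 0 < s).
  { apply sin_gt_0; replace (INR m * PI / INR n) with (INR m / INR n * PI)
      by (field; apply not_0_INR; lia); nra. }
  set (ph := 2 * PI * INR m / INR n).
  assert (Hph : cos ph = 1 - 2 * s ^ 2).
  { unfold s, ph. replace (2 * PI * INR m / INR n) with (2 * (INR m * PI / INR n))
      by (field; apply not_0_INR; lia). rewrite cos_2a_sin. ring. }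
  assert (Hconv' : forall j, cross (dvel g (X j)) (psub (rot ph (g (X j))) (g (X j))) > 0).
  { intros i. rewrite <- orbit_rot. apply Hconv. intros k Hk. rewrite X_step in Hk.
    apply (IZR_not_in_01 k). lra. }
  destruct (cross_chord_rot _ _ ph s c Hph Hs (orbit_perp j) (Hspeed _) (Hconv' j)) as [H1 _].
  destruct (cross_chord_rot _ _ ph s c Hph Hs (orbit_perp (j + 1)) (Hspeed _) (Hconv' (j + 1)%Z))
    as [_ H2].
  rewrite <- orbit_rot in H1.
  replace (rot (- ph) (g (X (j + 1)%Z))) with (g (X j)) in H2
    by (rewrite orbit_rot, rot_rot; fold ph; now rewrite Rplus_opp_l, rot_0).
  rewrite (Lf_sym g). split; assumption.
Qed.

Lemma orbit_alpha_beta_const_speed c i : (forall t, pnorm (dvel g t) = c) ->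
  (forall t, dvel g t <> (0, 0)) ->
  (forall s t, (forall k : Z, s - t <> IZR k) -> cross (dvel g t) (psub (g s) (g t)) > 0) ->
  let s := sin (INR m * PI / INR n) in
  let L := pnorm (psub (g (X (i + 1)%Z)) (g (X i))) in
  d11 (Lf g) (X 0%Z) (X 1%Z) = c ^ 2 * s * (s / L - kappa g (X i)) /\
  d12 (Lf g) (X 0%Z) (X 1%Z) = c ^ 2 * s ^ 2 / L.
Proof using m_range gx_C2 gy_C2 g_injective g_periodic g_rotation g_reflection X_step X_center.
  intros Hspeed Himm Hconv s L.
  change L with (Lf g (X (i + 1)%Z) (X i)). rewrite (Lf_sym g).
  assert (Hsep : 0 < Rabs (X i - X (i + 1)%Z) < 1) by now apply orbit_sep.
  destruct (orbit_cross_chord c i Hspeed Hconv) as [H1 H2].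
  rewrite <- (orbit_d11 i), <- (orbit_d12 i), (d11_Lf g gx_C2 gy_C2 g_injective) by exact Hsep.
  rewrite (d12_Lf g gx_C2 gy_C2 g_injective) by exact Hsep.
  pose proof (Lf_pos g g_injective _ _ Hsep) as HL.
  split.
  - apply (chord_d11_const_speed g c gx_C2 gy_C2 Hspeed); auto. now apply (speed_pos g c).
  - now apply chord_d12_const_speed.
Qed.

End OrbitCalculus.

Lemma sin_period_Z (N : Z) x : sin (x + 2 * IZR N * PI) = sin x.
Proof.
  destruct (Z_le_gt_dec 0 N).
  - rewrite <- (Z2Nat.id N), <- INR_IZR_INZ by auto. apply sin_period.
  - pose proof (sin_period (x + 2 * IZR N * PI) (Z.to_nat (- N))) as H.
    rewrite INR_IZR_INZ, Z2Nat.id, opp_IZR in H by lia. rewrite <- H. f_equal. ring.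
Qed.

Lemma cos_period_Z (N : Z) x : cos (x + 2 * IZR N * PI) = cos x.
Proof.
  destruct (Z_le_gt_dec 0 N).
  - rewrite <- (Z2Nat.id N), <- INR_IZR_INZ by auto. apply cos_period.
  - pose proof (cos_period (x + 2 * IZR N * PI) (Z.to_nat (- N))) as H.
    rewrite INR_IZR_INZ, Z2Nat.id, opp_IZR in H by lia. rewrite <- H. f_equal. ring.
Qed.

Lemma circ_fourier_modes p a b (M : nat -> nat -> R) (N : Z) j :
  (2 <= p)%nat -> (1 <= j <= p)%nat -> (forall k, (1 <= k <= p)%nat -> M j k = circ p a b j k) ->
  sumR (fun k => M j (S k) * sin (2 * PI * IZR N * INR (S k) / INR p)) p
  = (2 * a + 2 * b * cos (2 * PI * IZR N / INR p)) * sin (2 * PI * IZR N * INR j / INR p) /\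
  sumR (fun k => M j (S k) * cos (2 * PI * IZR N * INR (S k) / INR p)) p
  = (2 * a + 2 * b * cos (2 * PI * IZR N / INR p)) * cos (2 * PI * IZR N * INR j / INR p).
Proof.
  intros Hp Hj HM.
  assert (Hp0 : 0 < INR p) by (apply lt_0_INR; lia).
  set (th := 2 * PI * IZR N / INR p).
  assert (Hth : th * INR p = 2 * IZR N * PI) by (unfold th; field; lra).
  assert (Hangle : forall k, 2 * PI * IZR N * INR k / INR p = th * INR k)
    by (intros; unfold th; field; lra).
  assert (Hmode : forall h : R -> R, (forall x, h (x - th) + h (x + th) = 2 * cos th * h x) ->
            (forall x, h (x + th * INR p) = h x) ->
      sumR (fun k => M j (S k) * h (2 * PI * IZR N * INR (S k) / INR p)) p
      = (2 * a + 2 * b * cos th) * h (2 * PI * IZR N * INR j / INR p)).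
  { intros h H1 H2. rewrite Hangle, <- (circ_fourier p a b th h j); auto.
    apply sumR_ext. intros k Hk. rewrite Hangle, HM by lia. reflexivity. }
  split; apply Hmode; intros x; rewrite ?Hth.
  - rewrite sin_minus, sin_plus. ring.
  - apply sin_period_Z.
  - rewrite cos_minus, cos_plus. ring.
  - apply cos_period_Z.
Qed.

Theorem mainTheorem17 (m n s : nat) (g : R -> pt) (X : Z -> R) :
  Nat.gcd m n = 1%nat -> (1 <= m)%nat -> (m <= n - 1)%nat -> (1 <= s)%nat ->
  dn_billiard_curve n g ->
  billiard_orbit g X ->
  in_Xpq (Z.of_nat n) (INR m) X ->
  birkhoff X ->
  dn_symmetric n g X ->
  let p := (s * n)%nat in
  let q := INR (s * m) in
  exists alpha beta : R,
    (forall i : Z,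
        d22 (Lf g) (X (i - 1)%Z) (X i) = alpha /\
        d11 (Lf g) (X i) (X (i + 1)%Z) = alpha /\
        d12 (Lf g) (X i) (X (i + 1)%Z) = beta) /\
    (forall j k : nat, (1 <= j <= p)%nat -> (1 <= k <= p)%nat ->
        hess (Wpq g p q) (vecX X) j k = circ p alpha beta j k) /\
    (forall (N : Z) (j : nat), (1 <= j <= p)%nat ->
        sumR (fun k => hess (Wpq g p q) (vecX X) j (S k)
                       * sin (2 * PI * IZR N * INR (S k) / INR p)) p
        = (2 * alpha + 2 * beta * cos (2 * PI * IZR N / INR p))
          * sin (2 * PI * IZR N * INR j / INR p) /\
        sumR (fun k => hess (Wpq g p q) (vecX X) j (S k)
                       * cos (2 * PI * IZR N * INR (S k) / INR p)) p
        = (2 * alpha + 2 * beta * cos (2 * PI * IZR N / INR p))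
          * cos (2 * PI * IZR N * INR j / INR p)) /\
    (forall c : R, (forall t, pnorm (dvel g t) = c) ->
        forall i : Z,
          alpha = c ^ 2 * sin (INR m * PI / INR n)
                  * (sin (INR m * PI / INR n) / pnorm (psub (g (X (i + 1)%Z)) (g (X i)))
                     - kappa g (X i)) /\
          beta = c ^ 2 * (sin (INR m * PI / INR n)) ^ 2
                 / pnorm (psub (g (X (i + 1)%Z)) (g (X i)))).
Proof.
  intros _ Hm1 Hm2 Hs Hcurve Horb Hper _ Hsym p q.
  destruct Horb as [Hincr _].
  destruct Hcurve as (Cx & Cy & Hg1 & Hinj & Himm & Hconv & Hrot & Hrefl).
  assert (Hm : (1 <= m <= n - 1)%nat) by lia.
  pose proof (orbit_step m n g X ltac:(lia) Hinj Hrot Hincr Hper Hsym Hm) as Hstep.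
  pose proof (orbit_center m n g X ltac:(lia) Hinj Hrefl Hsym Hstep) as Hcenter.
  pose proof (hess_Wpq_orbit m n g X Hm Cx Cy Hinj Hg1 Hrot Hrefl Hstep Hcenter s Hs) as Hhess.
  exists (d11 (Lf g) (X 0%Z) (X 1%Z)), (d12 (Lf g) (X 0%Z) (X 1%Z)).
  split; [|split; [|split]].
  - intros i. split; [|split].
    + exact (orbit_d22 m n g X Hm Cx Cy Hinj Hg1 Hrot Hrefl Hstep Hcenter i).
    + exact (orbit_d11 m n g X Hm Hrot Hstep i).
    + exact (orbit_d12 m n g X Hm Hrot Hstep i).
  - exact Hhess.
  - intros N j Hj. apply circ_fourier_modes; auto. unfold p. nia.
  - intros c Hc i.
    exact (orbit_alpha_beta_const_speed m n g X Hm Cx Cy Hinj Hg1 Hrot Hrefl Hstep Hcenter c i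
             Hc Himm Hconv).
Qed.
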